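(* Let $\chi\in M_{\mathbb{R}}$ with $r(\chi)=r\ge\frac12$. Assume there are a sub-multiset $J\subset\mathcal{W}$ and a weight $\psi$ which is a linear combination of elements of $\mathcal{W}\setminus J$ with coefficients in $(0,r)$ such that \[\chi=-r\sum_{\beta\in J}\beta-\psi.\] Let $\lambda$ be a cocharacter of $SG(d)$ with $\chi\in F_r(\lambda)^{\mathrm{int}}$. Then $\{\beta\in\mathcal{W}:\langle\lambda,\beta\rangle>0\}\subset J$.
   Context: Let $Q=(I,E)$ be a symmetric quiver (for all $i,j\in I$ the number of arrows $i\to j$ equals the number of arrows $j\to i$), with source and target maps $s,t$. Fix $d\in\mathbb{N}^I$ and let $R(d)=\bigoplus_{a\in E}\mathrm{Hom}(\mathbb{C}^{d_{s(a)}},\mathbb{C}^{d_{t(a)}})$ with $G(d)=\prod_i GL(d_i)$ acting by conjugation. Standing assumption: the subquiver of $Q$ on the vertices $i$ with $d_i\neq0$ is connected and is not the quiver with one vertex and no arrows. Let $M=\bigoplus_{i\in I,1\le j\le d_i}\mathbb{Z}\beta^i_j$ be the weight lattice of the diagonal torus, $M_{\mathbb{R}}=M\otimes\mathbb{R}$, $N$ the dual lattice, $\langle\,,\rangle$ the pairing. Let $\mathcal{W}$ be the multiset of torus weights of $R(d)$ (for each arrow $a:i\to j$ and $x\le d_i$, $y\le d_j$, the weight $\beta^j_y-\beta^i_x$). Let $\tau_d=(\sum_{i,j}\beta^i_j)/(\sum_i d_i)$ and $\mathbb{W}=\sum_{\beta\in\mathcal{W}}[0,\beta]+\mathbb{R}\tau_d$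 (Minkowski sum). For $\chi\in M_{\mathbb{R}}$, $r(\chi)$ is the smallest $r\ge0$ with $\chi\in r\mathbb{W}$. A cocharacter of $SG(d)$ means an element $\lambda\in N$ with $\langle\lambda,\sum_{i,j}\beta^i_j\rangle=0$. Set $N^{\lambda>0}:=\sum_{\beta\in\mathcal{W},\,\langle\lambda,\beta\rangle>0}\beta$; $F_r(\lambda)=\{\psi\in r\mathbb{W}:\langle\lambda,\psi\rangle+r\langle\lambda,N^{\lambda>0}\rangle=0\}$. Write $\mu\ge\lambda$ if every $\beta\in\mathcal{W}$ with $\langle\lambda,\beta\rangle>0$ satisfies $\langle\mu,\beta\rangle>0$; $\mu>\lambda$ if $\mu\ge\lambda$ but not $\lambda\ge\mu$. Let $F_r(\lambda)^{\mathrm{int}}:=F_r(\lambda)\setminus\bigcup_{\mu>\lambda}F_r(\mu)$. *)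

From HB Require Import structures.
From mathcomp Require Import all_boot all_order all_algebra.
From mathcomp Require Import reals.
Set Implicit Arguments. Unset Strict Implicit. Unset Printing Implicit Defensive.
Import Order.TTheory GRing.Theory Num.Theory.
Local Open Scope ring_scope.

(* Index set of the basis beta^i_j of M : pairs (i, j) with j < d_i. *)
Definition Kidx (I : finType) (d : I -> nat) : finType := {i : I & 'I_(d i)}.
(* Index set of the multiset W of torus weights of R(d):
   triples (a, x, y), a an arrow, x < d_{s a}, y < d_{t a}. *)
Definition Widx (I E : finType) (s t : E -> I) (d : I -> nat) : finType :=
  {a : E & ('I_(d (s a)) * 'I_(d (t a)))%type}.

Section Defs.
Variable R : realType.
Variables (I E : finType) (s t : E -> I) (d : I -> nat).
Local Notation K := (Kidx d).
Local Notation W := (Widx s t d).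
Local Notation MR := {ffun K -> R^o}.
Local Notation NN := {ffun K -> int}.

Definition ebasis (k : K) : MR := [ffun k' => (k' == k)%:R].
Definition kpt (i : I) (x : 'I_(d i)) : K := Tagged (fun i => 'I_(d i)) x.

Definition weight (b : W) : MR :=
  ebasis (kpt (projT2 b).2) - ebasis (kpt (projT2 b).1).

Definition tau : MR := (\sum_i ((d i)%:R : R))^-1 *: \sum_k ebasis k.

Definition pairing (l : NN) (chi : MR) : R := \sum_k (l k)%:~R * chi k.

(* chi \in r W, W = sum_{beta in W} [0, beta] + R tau_d *)
Definition in_rW (r : R) (chi : MR) : Prop :=
  exists (c : W -> R) (u : R), (forall b, 0 <= c b <= 1) /\
    chi = r *: (\sum_b c b *: weight b + u *: tau).

Definition is_r (chi : MR) (r : R) : Prop :=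
  [/\ 0 <= r, in_rW r chi & forall r', 0 <= r' -> in_rW r' chi -> r <= r'].

Definition cochar (l : NN) : Prop := pairing l (\sum_k ebasis k) = 0.

Definition Npos (l : NN) : MR := \sum_(b | 0 < pairing l (weight b)) weight b.

Definition in_F (r : R) (l : NN) (psi : MR) : Prop :=
  in_rW r psi /\ pairing l psi + r * pairing l (Npos l) = 0.

Definition cge (mu l : NN) : Prop :=
  forall b : W, 0 < pairing l (weight b) -> 0 < pairing mu (weight b).
Definition cgt (mu l : NN) : Prop := cge mu l /\ ~ cge l mu.

Definition in_F_int (r : R) (l : NN) (psi : MR) : Prop :=
  in_F r l psi /\ forall mu : NN, cochar mu -> cgt mu l -> ~ in_F r mu psi.
End Defs.

Section Quiver.
Variables (I E : finType) (s t : E -> I) (d : I -> nat).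

Definition symmetric_quiver : Prop :=
  forall i j, #|[set a | (s a == i) && (t a == j)]| = #|[set a | (s a == j) && (t a == i)]|.

Definition supp (i : I) : bool := d i != 0%N.

Definition supp_adj : rel I := fun i j =>
  [exists a, [&& supp (s a), supp (t a) &
     ((s a == i) && (t a == j)) || ((s a == j) && (t a == i))]].

Definition standing_assumption : Prop :=
  [/\ exists i, supp i,
      forall i j, supp i -> supp j -> connect supp_adj i j &
      ~ (#|[set i | supp i]| = 1%N /\ forall a : E, ~~ (supp (s a) && supp (t a)))].
End Quiver.

From HB Require Import structures.
From mathcomp Require Import all_boot all_order all_algebra.
From mathcomp Require Import reals.
From mathcomp Require Import lra.
Set Implicit Arguments. Unset Strict Implicit. Unset Printing Implicit Defensive.
Import Order.TTheory GRing.Theory Num.Theory.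
Local Open Scope ring_scope.

(** Membership in [F_r(lambda)] says [<lambda, chi> = - r <lambda, N^(lambda>0)>],
  i.e. [r sum_J <lambda, beta> + sum_S c_beta <lambda, beta>] equals
  [r sum_(<lambda, beta> > 0) <lambda, beta>].  Compare the two sides weight by
  weight: as [J] and [S] are disjoint and [0 < c_beta < r], each weight
  contributes at most as much to the left side as to the right side, and
  strictly less when [<lambda, beta> > 0] but [beta] is not in [J].  Only
  [r > 0] and [chi \in F_r(lambda)] are used. *)

Section PositivePart.
Variables (R : realFieldType) (T : finType) (p c : T -> R) (r : R) (J S : {set T}).
Hypotheses (r_gt0 : 0 < r) (disjoint_SJ : [disjoint S & J]).
Hypothesis c_bounds : forall b, b \in S -> 0 <= c b < r.

Let contribution b :=
  (if b \in J then r * p b else 0) + (if b \in S then c b * p b else 0).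
Let positive_contribution b := if 0 < p b then r * p b else 0.

Lemma contribution_le b : contribution b <= positive_contribution b.
Proof.
rewrite /contribution /positive_contribution; case: ltrP => [pb_gt0|pb_le0].
  have [bS|_] := boolP (b \in S); last first.
    by rewrite addr0; case: ifP => // _; rewrite pmulr_rge0 // ltW.
  have /andP[_ /ltW c_le_r] := c_bounds bS.
  by rewrite (disjointFr disjoint_SJ bS) add0r ler_pM2r.
have rp_le0 : r * p b <= 0 by rewrite pmulr_rle0.
have cp_le0 : b \in S -> c b * p b <= 0.
  by move=> /c_bounds/andP[c_ge0 _]; exact: mulr_ge0_le0.
by case: ifP => _; case: ifP => [/cp_le0|_]; lra.
Qed.

Lemma contribution_lt b :
  b \notin J -> 0 < p b -> contribution b < positive_contribution b.
Proof.
move=> /negbTE bJ pb_gt0; rewrite /contribution /positive_contribution bJ pb_gt0 add0r.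
case: ifP => bS; last by rewrite mulr_gt0.
by have /andP[? ?] := c_bounds bS; nra.
Qed.

Lemma weighted_sum_lt_positive_part b0 : b0 \notin J -> 0 < p b0 ->
  r * \sum_(b in J) p b + \sum_(b in S) c b * p b < r * \sum_(b | 0 < p b) p b.
Proof.
move=> b0J pb0_gt0; rewrite !mulr_sumr big_mkcond [X in _ + X]big_mkcond.
rewrite [ltRHS]big_mkcond -big_split /=.
rewrite (bigD1 b0) //= [ltRHS](bigD1 b0) //=.
by rewrite ltr_leD ?contribution_lt // ler_sum // => b _; exact: contribution_le.
Qed.

End PositivePart.

Section PairingLinear.
Variables (R : realType) (I : finType) (d : I -> nat) (l : {ffun Kidx d -> int}).
Implicit Types x y : {ffun Kidx d -> R^o}.

Lemma pairingD x y : pairing l (x + y) = pairing l x + pairing l y.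
Proof. by rewrite /pairing -big_split; apply: eq_bigr => k _; rewrite ffunE mulrDr. Qed.

Lemma pairingN x : pairing l (- x) = - pairing l x.
Proof. by rewrite /pairing -sumrN; apply: eq_bigr => k _; rewrite ffunE mulrN. Qed.

Lemma pairingZ (a : R) x : pairing l (a *: x) = a * pairing l x.
Proof. by rewrite /pairing mulr_sumr; apply: eq_bigr => k _; rewrite ffunE mulrCA. Qed.

Lemma pairing_sum (T : finType) (P : pred T) (F : T -> {ffun Kidx d -> R^o}) :
  pairing l (\sum_(b | P b) F b) = \sum_(b | P b) pairing l (F b).
Proof.
apply: (big_morph _ pairingD).
by rewrite /pairing big1 // => k _; rewrite ffunE mulr0.
Qed.

End PairingLinear.

Theorem proposition3p3 (R : realType) (I E : finType) (s t : E -> I) (d : I -> nat)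
  (Hsym : symmetric_quiver s t) (Hstand : standing_assumption s t d)
  (chi : {ffun Kidx d -> R^o}) (r : R)
  (Hr : is_r s t chi r) (Hr2 : 1 / 2 <= r)
  (J : {set Widx s t d}) (psi : {ffun Kidx d -> R^o})
  (Hpsi : exists (S : {set Widx s t d}) (c : Widx s t d -> R),
      [/\ S \subset ~: J, (forall b, b \in S -> 0 < c b < r) &
          psi = \sum_(b in S) c b *: weight R b])
  (Hchi : chi = - (r *: \sum_(b in J) weight R b) - psi)
  (l : {ffun Kidx d -> int}) (Hl : cochar R l) (Hint : in_F_int s t r l chi) :
  forall b : Widx s t d, 0 < pairing l (weight R b) -> b \in J.
Proof.
move=> b0 pb0_gt0; apply: contraT => b0J.
have r_gt0 : 0 < r by apply: lt_le_trans Hr2; rewrite divr_gt0.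
case: Hpsi => S [c [SJ c_range psiE]].
have disjoint_SJ : [disjoint S & J] by rewrite disjoints_subset.
have c_bounds b : b \in S -> 0 <= c b < r.
  by move=> /c_range /andP[/ltW -> ->].
have [[_ F_eq] _] := Hint; move: F_eq.
rewrite /Npos Hchi psiE pairingD !pairingN !pairingZ !pairing_sum.
under [\sum_(b in S) _]eq_bigr => b _ do rewrite pairingZ.
have := weighted_sum_lt_positive_part (p := fun b => pairing l (weight R b))
  r_gt0 disjoint_SJ c_bounds b0J pb0_gt0.
lra.
Qed.
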